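(* Consider the following heap data structure $H$ in the word-RAM model. A global time counter $t$ (initially $0$) is incremented after every \textsc{Push}; for an element $x_i$ of $H$, $a_i$ denotes the value of $t$ when $x_i$ was pushed. The elements of $H$ are partitioned into an array of buckets $B$; each bucket $B[j]$ contains one or two Fibonacci heaps, every element of $H$ lies in exactly one of these Fibonacci heaps, and with each Fibonacci heap $F$ a half-open interval $I_F\subset\mathbb{R}$ is stored, such that at all times $t$: (a) an element $x_i\in H$ is in $F$ if and only if $a_i\in I_F$; (b) the interval $I_F$ of every $F$ in $B[j]$ has length $2^j$; (c) all intervals of the Fibonacci heaps in $B[j-1]$ lie to the right of the intervals of the Fibonacci heaps in $B[j]$; (d) all the intervals together partition $[0,t)$. Then for any element $x_i\in H$, given $a_i$ and $t$, the bucket and the Fibonacci heap containing $x_i$ can be computed in constant time.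
   Context: Fibonacci heaps are the standard heap data structure of Fredman and Tarjan. Computation is in the word-RAM model. *)

From Stdlib Require Import Reals Lia List Arith.
Import ListNotations.
Open Scope R_scope.

(* Words are natural numbers < 2^w; arithmetic wraps modulo 2^w.        *)

Inductive binop : Set :=
  | OAdd | OSub | OMul | ODiv | OMod
  | OAnd | OOr | OXor | OShl | OShr | OLt | OEq.

Inductive instr : Set :=
  | IConst (d c : nat)
  | IBin (o : binop) (d s1 s2 : nat)
  | IMsb (d s : nat)              (* r_d := floor(log2 r_s)  (0 if r_s = 0) *)
  | IJz (s target : nat)
  | IJmp (target : nat)
  | IHalt.

Definition eval_binop (w : nat) (o : binop) (x y : nat) : nat :=
  match o with
  | OAdd => (x + y) mod 2 ^ w
  | OSub => (x + 2 ^ w - y) mod 2 ^ w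
  | OMul => (x * y) mod 2 ^ w
  | ODiv => x / y
  | OMod => x mod y
  | OAnd => Nat.land x y
  | OOr => Nat.lor x y
  | OXor => Nat.lxor x y
  | OShl => (Nat.shiftl x y) mod 2 ^ w
  | OShr => Nat.shiftr x y
  | OLt => if Nat.ltb x y then 1%nat else 0%nat
  | OEq => if Nat.eqb x y then 1%nat else 0%nat
  end.

Definition regfile := nat -> nat.

Definition upd (rf : regfile) (d v : nat) : regfile :=
  fun r => if Nat.eqb r d then v else rf r.

Fixpoint run (w : nat) (prog : list instr) (fuel pc : nat) (rf : regfile)
  : option regfile :=
  match fuel with
  | O => None
  | S f =>
    match nth_error prog pc with
    | None => None
    | Some IHalt => Some rf
    | Some (IConst d c) => run w prog f (S pc) (upd rf d (c mod 2 ^ w))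
    | Some (IBin o d s1 s2) =>
        run w prog f (S pc) (upd rf d (eval_binop w o (rf s1) (rf s2)))
    | Some (IMsb d s) => run w prog f (S pc) (upd rf d (Nat.log2 (rf s)))
    | Some (IJz s tg) =>
        if Nat.eqb (rf s) 0 then run w prog f tg rf else run w prog f (S pc) rf
    | Some (IJmp tg) => run w prog f tg rf
    end
  end.

Definition init_regs (a t : nat) : regfile :=
  fun r => if Nat.eqb r 0 then a else if Nat.eqb r 1 then t else 0%nat.

(* A half-open real interval: [lo, hi) if lclosed, (lo, hi] otherwise. *)
Record hinterval := { lo : R; hi : R; lclosed : bool }.

Definition in_int (I : hinterval) (x : R) : Prop :=
  if lclosed I then lo I <= x < hi I else lo I < x <= hi I.

(* Each Fibonacci heap F is represented by its interval I_F; by invariant (a)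
   its element set is exactly {x_i in H | a_i in I_F}.  A bucket B[j] is the
   list of (intervals of) its Fibonacci heaps. *)
Record heap_state := {
  time : nat;
  elems : list nat;                 (* the push times a_i of the elements of H *)
  buckets : list (list hinterval)
}.

Definition in_bucket (H : heap_state) (j : nat) (I : hinterval) : Prop :=
  exists Bj, nth_error (buckets H) j = Some Bj /\ In I Bj.

Definition heap_inv (H : heap_state) : Prop :=
  (* push times are distinct values of t at earlier pushes *)
  (forall a, In a (elems H) -> (a < time H)%nat) /\
  NoDup (elems H) /\
  (forall j Bj, nth_error (buckets H) j = Some Bj ->
     length Bj = 1%nat \/ length Bj = 2%nat) /\
  (forall j I, in_bucket H j I -> hi I - lo I = 2 ^ j) /\
  (forall j I G x y, in_bucket H j I -> in_bucket H (S j) G ->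
     in_int I x -> in_int G y -> y < x) /\
  (* (d) all the intervals together partition [0, t) *)
  (forall j I x, in_bucket H j I -> in_int I x -> 0 <= x < INR (time H)) /\
  (forall x, 0 <= x < INR (time H) ->
     exists j Bj k I, nth_error (buckets H) j = Some Bj /\
       nth_error Bj k = Some I /\ in_int I x) /\
  (forall j Bj k I j' Bj' k' I' x,
     nth_error (buckets H) j = Some Bj -> nth_error Bj k = Some I ->
     nth_error (buckets H) j' = Some Bj' -> nth_error Bj' k' = Some I' ->
     in_int I x -> in_int I' x -> j = j' /\ k = k').

(* Since every heap of B[j] has length 2^j, an integer, and the heaps tile [0, t), a sweep
   from 0 shows that each heap interval is [n, n + 2^j) with n integral.  By (c) the buckets
   are laid out from right to left, so B[j] occupies [t - S_(j+1), t - S_j), where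
   S_K = sum_(i<K) |B[i]| 2^i.  As |B[i]| is 1 or 2, t + 1 = 2^m + sum_(i<m) (|B[i]| - 1) 2^i
   is the binary expansion of t + 1, hence S_K + 1 = 2^K + (t + 1 - 2^m) mod 2^K with
   m = msb (t + 1).  So a constant number of word operations recovers S_K, then j from
   msb (t - a), and finally the left end of the heap from (a - (t - S_(j+1))) mod 2^j. *)

From Stdlib Require Import Reals Lra Lia List Arith ZArith Classical.
Import ListNotations.

Open Scope nat_scope.

(** * Sums of powers of two *)

Fixpoint sum_pow2 (c : nat -> nat) (K : nat) : nat :=
  match K with
  | 0 => 0
  | S K => sum_pow2 c K + c K * 2 ^ K
  end.

Lemma sum_pow2_shift c K n :
  sum_pow2 c (K + n) = sum_pow2 c K + 2 ^ K * sum_pow2 (fun i => c (K + i)) n.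
Proof.
  induction n as [|n IH]; cbn [sum_pow2]; [rewrite Nat.add_0_r; lia|].
  rewrite Nat.add_succ_r; cbn [sum_pow2]. rewrite IH, Nat.pow_add_r. ring.
Qed.

Lemma sum_pow2_bits_lt c K : (forall i, i < K -> c i <= 1) -> sum_pow2 c K < 2 ^ K.
Proof.
  induction K as [|K IH]; intros Hc; cbn [sum_pow2]; [simpl; lia|].
  assert (IHK : sum_pow2 c K < 2 ^ K) by (apply IH; intros i Hi; apply Hc; lia).
  assert (HcK : c K <= 1) by (apply Hc; lia).
  rewrite Nat.pow_succ_r'. nia.
Qed.

Lemma sum_pow2_bits_mod c m K : (forall i, i < m -> c i <= 1) -> K <= m ->
  sum_pow2 c m mod 2 ^ K = sum_pow2 c K.
Proof.
  intros Hc HK. replace m with (K + (m - K)) by lia.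
  rewrite sum_pow2_shift, Nat.mul_comm, Nat.Div0.mod_add.
  apply Nat.mod_small, sum_pow2_bits_lt. intros i Hi. apply Hc. lia.
Qed.

Lemma sum_pow2_succ_digits c K : (forall i, i < K -> 1 <= c i) ->
  sum_pow2 c K + 1 = 2 ^ K + sum_pow2 (fun i => c i - 1) K.
Proof.
  induction K as [|K IH]; intros Hc; cbn [sum_pow2]; [simpl; lia|].
  assert (IHK := IH (fun i Hi => Hc i (Nat.lt_lt_succ_r _ _ Hi))).
  assert (HcK : 1 <= c K) by (apply Hc; lia).
  rewrite Nat.pow_succ_r'. replace (c K) with (S (c K - 1)) at 1 by lia. nia.
Qed.

Lemma sum_pow2_binary c m : (forall i, i < m -> 1 <= c i <= 2) ->
  2 ^ m <= sum_pow2 c m + 1 < 2 ^ S m /\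
  forall K, K <= m -> sum_pow2 c K + 1 = 2 ^ K + (sum_pow2 c m + 1 - 2 ^ m) mod 2 ^ K.
Proof.
  intros Hc.
  assert (Hdig : forall K, K <= m -> sum_pow2 c K + 1 = 2 ^ K + sum_pow2 (fun i => c i - 1) K)
    by (intros K HK; apply sum_pow2_succ_digits; intros i Hi; specialize (Hc i); lia).
  assert (Hbits : forall i, i < m -> c i - 1 <= 1) by (intros i Hi; specialize (Hc i Hi); lia).
  pose proof (sum_pow2_bits_lt _ m Hbits) as Hlt.
  rewrite (Hdig m (le_n m)), Nat.pow_succ_r'. split; [lia|].
  intros K HK. rewrite (Hdig K HK). f_equal.
  replace (2 ^ m + _ - 2 ^ m) with (sum_pow2 (fun i => c i - 1) m) by lia.
  symmetry; now apply sum_pow2_bits_mod.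
Qed.

(** * The word-RAM program *)

Lemma eval_add w x y : x + y < 2 ^ w -> eval_binop w OAdd x y = x + y.
Proof. intros; apply Nat.mod_small; assumption. Qed.

Lemma eval_sub w x y : y <= x -> x < 2 ^ w -> eval_binop w OSub x y = x - y.
Proof.
  intros; cbn. replace (x + 2 ^ w - y) with (x - y + 1 * 2 ^ w) by lia.
  rewrite Nat.Div0.mod_add. apply Nat.mod_small; lia.
Qed.

Lemma eval_shl_1 w k : 2 ^ k < 2 ^ w -> eval_binop w OShl 1 k = 2 ^ k.
Proof. intros; cbn. rewrite Nat.shiftl_1_l. apply Nat.mod_small; assumption. Qed.

Lemma run_const w p f pc rf d c v : nth_error p pc = Some (IConst d c) ->
  c mod 2 ^ w = v -> run w p (S f) pc rf = run w p f (S pc) (upd rf d v).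
Proof. intros E V. cbn [run]. now rewrite E, V. Qed.

Lemma run_bin w p f pc rf o d s1 s2 v : nth_error p pc = Some (IBin o d s1 s2) ->
  eval_binop w o (rf s1) (rf s2) = v -> run w p (S f) pc rf = run w p f (S pc) (upd rf d v).
Proof. intros E V. cbn [run]. now rewrite E, V. Qed.

Lemma run_msb w p f pc rf d s v : nth_error p pc = Some (IMsb d s) ->
  Nat.log2 (rf s) = v -> run w p (S f) pc rf = run w p f (S pc) (upd rf d v).
Proof. intros E V. cbn [run]. now rewrite E, V. Qed.

Lemma run_halt w p f pc rf : nth_error p pc = Some IHalt -> run w p (S f) pc rf = Some rf.
Proof. intros E. cbn [run]. now rewrite E. Qed.

(* One more than the number of slots of [0, t) taken by B[0], ..., B[K-1], when
   m = msb (t + 1) (see [below_code_spec]). *)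
Definition below_code (t m K : nat) : nat := 2 ^ K + (S t - 2 ^ m) mod 2 ^ K.

Lemma below_code_bounds t m K : 2 ^ m <= S t -> K <= m ->
  2 ^ K <= below_code t m K < 2 ^ S K /\ below_code t m K <= S t.
Proof.
  intros Hm HK. unfold below_code.
  assert (HKm : 2 ^ K <= 2 ^ m) by (apply Nat.pow_le_mono_r; lia).
  pose proof (Nat.mod_upper_bound (S t - 2 ^ m) (2 ^ K) (Nat.pow_nonzero 2 K ltac:(lia))).
  pose proof (Nat.Div0.mod_le (S t - 2 ^ m) (2 ^ K)).
  rewrite Nat.pow_succ_r'. lia.
Qed.

(* With u = t - a and K = msb u, the bucket index is j = K - [u < below_code K];
   the heap of B[j] containing a starts at a - ((a - s) mod 2^j),
   where s = t + 1 - below_code (j + 1) is the left end of B[j]. *)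
Definition locate : list instr := [
  IConst 2 1;
  IBin OAdd 3 1 2;
  IMsb 4 3;            (* r4  = m *)
  IBin OShl 5 2 4;
  IBin OSub 6 3 5;     (* r6  = t + 1 - 2^m *)
  IBin OSub 7 1 0;     (* r7  = u *)
  IMsb 8 7;            (* r8  = K *)
  IBin OShl 9 2 8;
  IBin OMod 10 6 9;
  IBin OAdd 11 9 10;   (* r11 = below_code K *)
  IBin OLt 12 7 11;
  IBin OSub 13 8 12;   (* r13 = j *)
  IBin OShl 14 2 13;
  IBin OAdd 15 14 14;
  IBin OMod 16 6 15;
  IBin OAdd 17 15 16;  (* r17 = below_code (j + 1) *)
  IBin OSub 18 3 17;   (* r18 = s *)
  IBin OSub 19 0 18;
  IBin OMod 20 19 14;
  IBin OSub 1 0 20;    (* r1  = start of the heap *)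
  IBin OSub 0 8 12;
  IHalt ].

(* Executes the next instruction, which must write the value [val]. *)
Ltac exec_step val :=
  match goal with
  | |- run _ ?p (S _) ?pc _ = _ =>
    lazymatch eval compute in (nth_error p pc) with
    | Some (IConst _ _) => erewrite run_const with (v := val)
    | Some (IBin _ _ _ _) => erewrite run_bin with (v := val)
    | Some (IMsb _ _) => erewrite run_msb with (v := val)
    end;
    [ | reflexivity
      | cbn [upd init_regs Nat.eqb];
        first [ reflexivity
              | assumption
              | apply Nat.mod_small; lia
              | apply eval_shl_1; lia
              | rewrite eval_add by lia; lia
              | rewrite eval_sub by lia; lia ] ]
  end.

Lemma log2_select (P : nat -> nat) u j :
  2 ^ j <= P j <= u -> u < P (S j) -> P (S j) < 2 ^ S (S j) ->
  Nat.log2 u = j + (if u <? P (Nat.log2 u) then 1 else 0).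
Proof.
  intros Hj HSj HP. rewrite !Nat.pow_succ_r' in *.
  destruct (Nat.lt_ge_cases u (2 * 2 ^ j)) as [Hlt | Hge].
  - assert (HK : Nat.log2 u = j) by (apply Nat.log2_unique; rewrite ?Nat.pow_succ_r'; lia).
    rewrite HK, (proj2 (Nat.ltb_ge _ _)); lia.
  - assert (HK : Nat.log2 u = S j) by (apply Nat.log2_unique; rewrite ?Nat.pow_succ_r'; lia).
    rewrite HK, (proj2 (Nat.ltb_lt _ _)); lia.
Qed.

Lemma sub_mod_block s n a L e : n = s + e * L -> n <= a < n + L -> (a - s) mod L = a - n.
Proof. intros Hn Ha. symmetry. apply (Nat.mod_unique _ _ e); lia. Qed.

Lemma locate_correct w t a m j n :
  S t < 2 ^ w -> 2 ^ m <= S t < 2 ^ S m -> S j <= m ->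
  below_code t m j <= t - a < below_code t m (S j) ->
  n <= a < n + 2 ^ j ->
  n = S t - below_code t m (S j) \/ n = S t - below_code t m (S j) + 2 ^ j ->
  exists rf, run w locate 22 0 (init_regs a t) = Some rf /\ rf 0 = j /\ rf 1 = n.
Proof.
  intros Hw Hm Hj Hu Hn Hstart.
  set (D := S t - 2 ^ m).
  set (u := t - a) in *.
  set (s := S t - below_code t m (S j)) in *.
  destruct (below_code_bounds t m j) as [[Hj1 Hj2] Hj3]; try lia.
  destruct (below_code_bounds t m (S j)) as [[HSj1 HSj2] HSj3]; try lia.
  assert (Hjm : 2 ^ S j <= 2 ^ m) by (apply Nat.pow_le_mono_r; lia).
  assert (Hm_small : m < 2 ^ m) by (apply Nat.pow_gt_lin_r; lia).
  assert (Hmsb : Nat.log2 (S t) = m) by (apply Nat.log2_unique; lia).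
  set (K := Nat.log2 u).
  assert (HK : 2 ^ K <= u < 2 ^ S K) by (apply Nat.log2_spec; lia).
  set (fl := if u <? below_code t m K then 1 else 0).
  assert (Hfl : K = j + fl) by exact (log2_select (below_code t m) u j ltac:(lia) ltac:(lia) HSj2).
  assert (Hfl1 : fl <= 1) by (unfold fl; destruct (_ <? _); lia).
  destruct (below_code_bounds t m K) as [[HK1 HK2] HK3]; try lia.
  assert (Hoffset : (a - s) mod 2 ^ j = a - n)
    by (destruct Hstart; [apply (sub_mod_block s n a _ 0) | apply (sub_mod_block s n a _ 1)]; lia).
  assert (Hdouble : 2 ^ j + 2 ^ j = 2 ^ S j) by (rewrite Nat.pow_succ_r'; lia).
  eexists; split.
  - unfold locate.
    exec_step 1. exec_step (S t). exec_step m. exec_step (2 ^ m). exec_step D.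
    exec_step u. exec_step K. exec_step (2 ^ K). exec_step (D mod 2 ^ K).
    exec_step (below_code t m K). exec_step fl. exec_step j. exec_step (2 ^ j).
    exec_step (2 ^ S j). exec_step (D mod 2 ^ S j). exec_step (below_code t m (S j)).
    exec_step s. exec_step (a - s). exec_step (a - n). exec_step n. exec_step j.
    now apply run_halt.
  - split; reflexivity.
Qed.

(** * Partitions of [0, T) into intervals of integer length *)

Open Scope R_scope.

Lemma interval_has_integer I : 1 <= hi I - lo I -> exists z : Z, in_int I (IZR z).
Proof.
  intros Hlen. destruct (archimed (lo I)) as [Hup1 Hup2].
  unfold in_int. destruct (lclosed I).
  - destruct (Rle_lt_dec (lo I) (IZR (up (lo I) - 1))) as [Hle|Hlt];
      rewrite minus_IZR in *.
    + exists (up (lo I) - 1)%Z. rewrite minus_IZR. lra.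
    + exists (up (lo I)). lra.
  - exists (up (lo I)). lra.
Qed.

Lemma nonneg_integer_nat (z : Z) : 0 <= IZR z -> exists n : nat, IZR z = INR n.
Proof.
  intros Hz. exists (Z.to_nat z).
  rewrite INR_IZR_INZ, Z2Nat.id; [reflexivity|]. apply le_IZR. exact Hz.
Qed.

Section IntegerPartition.

Variable fam : hinterval -> Prop.
Variable T : R.
Hypothesis fam_length : forall I, fam I -> exists n : nat, (1 <= n)%nat /\ hi I - lo I = INR n.
Hypothesis fam_range : forall I x, fam I -> in_int I x -> 0 <= x < T.
Hypothesis fam_cover : forall x, 0 <= x < T -> exists I, fam I /\ in_int I x.
Hypothesis fam_disjoint : forall I J x, fam I -> fam J -> in_int I x -> in_int J x -> I = J.

Lemma fam_has_nat I : fam I -> exists n : nat, in_int I (INR n).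
Proof.
  intros HI. destruct (fam_length I HI) as [len [Hlen Hhi]].
  apply le_INR in Hlen.
  destruct (interval_has_integer I) as [z Hz]; [simpl in Hlen; lra|].
  destruct (nonneg_integer_nat z) as [n Hn]; [apply (fam_range I _ HI Hz)|].
  exists n. rewrite <- Hn. exact Hz.
Qed.

Lemma fam_zero_left_end I : fam I -> in_int I 0 -> lclosed I = true /\ lo I = 0.
Proof.
  intros HI H0. pose proof (fam_length I HI) as [len [Hlen Hhi]].
  apply le_INR in Hlen. simpl in Hlen.
  unfold in_int in *. destruct (lclosed I) eqn:Ec.
  - assert (Hlo : 0 <= lo I) by (apply (fam_range I (lo I) HI); rewrite Ec; lra).
    split; [reflexivity | lra].
  - assert (Hneg : 0 <= lo I / 2) by (apply (fam_range I (lo I / 2) HI); rewrite Ec; lra).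
    lra.
Qed.

(* The interval containing p ends exactly at p + 1, so I cannot start before p + 1. *)
Lemma fam_left_end_succ p I :
  (forall J, fam J -> in_int J (INR p) -> lclosed J = true /\ exists q, (q <= p)%nat /\ lo J = INR q) ->
  fam I -> in_int I (INR (S p)) -> ~ in_int I (INR p) -> lclosed I = true /\ lo I = INR (S p).
Proof.
  intros IH HI HSp Hp. rewrite S_INR in *.
  destruct (fam_range I _ HI HSp) as [_ HST].
  destruct (fam_cover (INR p)) as [J [HJ HpJ]]; [split; [apply pos_INR | lra]|].
  destruct (IH J HJ HpJ) as [HcJ [q [Hqp HloJ]]].
  destruct (fam_length J HJ) as [len [_ HhiJ]].
  assert (HJI : J <> I) by (intros ->; contradiction).
  assert (HSpJ : ~ in_int J (INR p + 1)) by (intros h; apply HJI, (fam_disjoint J I _ HJ HI h HSp)).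
  unfold in_int in HpJ, HSpJ. rewrite HcJ in HpJ, HSpJ.
  assert (HhiJ' : hi J = INR (S p)).
  { assert (Hend : hi J = INR (q + len)) by (rewrite plus_INR; lra).
    rewrite Hend in *. f_equal.
    apply le_INR in Hqp.
    assert (p < q + len)%nat by (apply INR_lt; lra).
    assert (q + len <= S p)%nat by (apply INR_le; rewrite S_INR; lra).
    lia. }
  rewrite S_INR in HhiJ'.
  assert (Hnot_below : ~ lo I < INR p + 1).
  { intros Hlt. pose proof (Rmax_l (lo I) (INR p)). pose proof (Rmax_r (lo I) (INR p)).
    pose proof (Rmax_lub_lt (lo I) (INR p) (INR p + 1) Hlt ltac:(lra)).
    apply HJI, (fam_disjoint J I ((Rmax (lo I) (INR p) + (INR p + 1)) / 2) HJ HI).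
    - unfold in_int. rewrite HcJ. apply le_INR in Hqp. lra.
    - unfold in_int in *. destruct (lclosed I); lra. }
  unfold in_int in HSp. destruct (lclosed I); split; lra.
Qed.

Lemma fam_left_end_nat_aux n : forall I, fam I -> in_int I (INR n) ->
  lclosed I = true /\ exists q, (q <= n)%nat /\ lo I = INR q.
Proof.
  induction n as [n IH] using lt_wf_ind. intros I HI Hn.
  destruct n as [|p].
  - destruct (fam_zero_left_end I HI Hn) as [Hc Hlo]. split; [exact Hc|]. now exists 0%nat.
  - destruct (classic (in_int I (INR p))) as [Hp|Hp].
    + destruct (IH p (Nat.lt_succ_diag_r p) I HI Hp) as [Hc [q [Hq Hlo]]].
      split; [exact Hc|]. exists q. split; [lia | exact Hlo].
    + destruct (fam_left_end_succ p I (IH p (Nat.lt_succ_diag_r p)) HI Hn Hp) as [Hc Hlo].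
      split; [exact Hc|]. now exists (S p).
Qed.

Lemma fam_left_end_nat I : fam I -> lclosed I = true /\ exists n : nat, lo I = INR n.
Proof.
  intros HI. destruct (fam_has_nat I HI) as [p Hp].
  destruct (fam_left_end_nat_aux p I HI Hp) as [Hc [q [_ Hq]]].
  split; [exact Hc|]. now exists q.
Qed.

End IntegerPartition.

(** * Layout of the buckets *)

Open Scope nat_scope.

Lemma tile_one n L e : 1 <= L -> n + L <= e ->
  (forall x, x < e -> n <= x < n + L \/ x < n) -> n + L = e.
Proof. intros HL Hin Hcov. specialize (Hcov (e - 1)). lia. Qed.

Lemma tile_two n1 n2 L e : 1 <= L ->
  (forall x, ~ (n1 <= x < n1 + L /\ n2 <= x < n2 + L)) -> n1 + L <= e -> n2 + L <= e ->
  (forall x, x < e -> n1 <= x < n1 + L \/ n2 <= x < n2 + L \/ (x < n1 /\ x < n2)) ->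
  (n1 + L = n2 /\ n2 + L = e) \/ (n2 + L = n1 /\ n1 + L = e).
Proof.
  intros HL Hdisj Hin1 Hin2 Hcov.
  pose proof (Hdisj n1). pose proof (Hdisj n2).
  pose proof (Hcov (e - 1)). pose proof (Hcov (n1 + L)). pose proof (Hcov (n2 + L)).
  lia.
Qed.

Definition final_segment (P : nat -> Prop) (e : nat) : Prop :=
  (forall x, P x -> x < e) /\ (forall x, x < e -> P x \/ forall y, P y -> x < y).

Definition is_block (I : hinterval) (n L : nat) : Prop :=
  lo I = INR n /\ forall x : nat, in_int I (INR x) <-> n <= x < n + L.

Definition at_bucket (H : heap_state) (j x : nat) : Prop :=
  exists I, in_bucket H j I /\ in_int I (INR x).

Definition bucket_size (H : heap_state) (i : nat) : nat := length (nth i (buckets H) []).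

Definition below (H : heap_state) (K : nat) : nat := sum_pow2 (bucket_size H) K.

Definition bucket_tiling (H : heap_state) (j e : nat) : Prop :=
  let s := e - bucket_size H j * 2 ^ j in
  bucket_size H j * 2 ^ j <= e /\
  (forall x, at_bucket H j x <-> s <= x < e) /\
  (forall I, in_bucket H j I -> exists n, is_block I n (2 ^ j) /\ (n = s \/ n = s + 2 ^ j)).

Definition layout_below (H : heap_state) (K : nat) : Prop :=
  below H K <= time H /\
  forall x, x < time H -> (time H <= x + below H K <-> exists i, i < K /\ at_bucket H i x).

Lemma pow2_INR j : (2 ^ j)%R = INR (2 ^ j).
Proof. now rewrite pow_INR. Qed.

Section Layout.

Variable H : heap_state.
Hypothesis Hinv : heap_inv H.

Lemma bucket_size_1_2 j Bj : nth_error (buckets H) j = Some Bj -> length Bj = 1 \/ length Bj = 2.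
Proof. destruct Hinv as (_ & _ & Hsize & _). apply Hsize. Qed.

Lemma bucket_interval_length j I : in_bucket H j I -> (hi I - lo I = INR (2 ^ j))%R.
Proof. destruct Hinv as (_ & _ & _ & Hlen & _). rewrite <- pow2_INR. apply Hlen. Qed.

Lemma bucket_interval_range j I x : in_bucket H j I -> in_int I x -> (0 <= x < INR (time H))%R.
Proof. destruct Hinv as (_ & _ & _ & _ & _ & Hrange & _). apply Hrange. Qed.

Lemma bucket_interval_cover x : (0 <= x < INR (time H))%R -> exists j I, in_bucket H j I /\ in_int I x.
Proof.
  destruct Hinv as (_ & _ & _ & _ & _ & _ & Hcover & _). intros Hx.
  destruct (Hcover x Hx) as (j & Bj & k & I & HBj & HI & HxI).
  exists j, I. split; [exists Bj; split; [exact HBj | eapply nth_error_In; eauto] | exact HxI].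
Qed.

Lemma bucket_interval_unique j I j' I' x : in_bucket H j I -> in_bucket H j' I' ->
  in_int I x -> in_int I' x -> j = j' /\ I = I'.
Proof.
  destruct Hinv as (_ & _ & _ & _ & _ & _ & _ & Huniq).
  intros [Bj [HBj HI]] [Bj' [HBj' HI']] HxI HxI'.
  apply In_nth_error in HI as [k Hk]. apply In_nth_error in HI' as [k' Hk'].
  destruct (Huniq _ _ _ _ _ _ _ _ _ HBj Hk HBj' Hk' HxI HxI') as [<- <-].
  split; congruence.
Qed.

Lemma pair_bucket_disjoint j I1 I2 x : nth_error (buckets H) j = Some [I1; I2] ->
  in_int I1 x -> in_int I2 x -> False.
Proof.
  destruct Hinv as (_ & _ & _ & _ & _ & _ & _ & Huniq). intros HBj Hx1 Hx2.
  destruct (Huniq j _ 0 I1 j _ 1 I2 x HBj eq_refl HBj eq_refl Hx1 Hx2). discriminate.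
Qed.

Lemma bucket_block j I : in_bucket H j I -> exists n, is_block I n (2 ^ j).
Proof.
  intros HI.
  destruct (fam_left_end_nat (fun I => exists j, in_bucket H j I) (INR (time H))) with I
    as [Hc [n Hn]].
  - intros J [j' HJ]. exists (2 ^ j'). split; [pose proof (Nat.pow_nonzero 2 j'); lia|].
    exact (bucket_interval_length j' J HJ).
  - intros J x [j' HJ] HxJ. exact (bucket_interval_range j' J x HJ HxJ).
  - intros x Hx. destruct (bucket_interval_cover x Hx) as (j' & J & HJ & HxJ).
    exists J. split; [exists j'|]; assumption.
  - intros J J' x [j1 HJ] [j2 HJ'] HxJ HxJ'. exact (proj2 (bucket_interval_unique _ _ _ _ _ HJ HJ' HxJ HxJ')).
  - now exists j.
  - exists n. split; [exact Hn|]. intros x.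
    pose proof (bucket_interval_length j I HI) as Hlen.
    unfold in_int. rewrite Hc. split.
    + intros [Hlo Hhi]. split; [apply INR_le | apply INR_lt; rewrite plus_INR]; lra.
    + intros [Hlo Hhi]. apply le_INR in Hlo. apply lt_INR in Hhi. rewrite plus_INR in Hhi. lra.
Qed.

Lemma at_bucket_time j x : at_bucket H j x -> x < time H.
Proof.
  intros [I [HI HxI]]. apply INR_lt. exact (proj2 (bucket_interval_range j I _ HI HxI)).
Qed.

Lemma at_bucket_cover x : x < time H -> exists j, at_bucket H j x.
Proof.
  intros Hx. destruct (bucket_interval_cover (INR x)) as (j & I & HI & HxI).
  - split; [apply pos_INR | now apply lt_INR].
  - now exists j, I.
Qed.

Lemma at_bucket_unique j j' x : at_bucket H j x -> at_bucket H j' x -> j = j'.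
Proof.
  intros [I [HI HxI]] [I' [HI' HxI']]. exact (proj1 (bucket_interval_unique _ _ _ _ _ HI HI' HxI HxI')).
Qed.

Lemma at_bucket_index j x : at_bucket H j x -> j < length (buckets H).
Proof. intros (I & [Bj [HBj _]] & _). apply nth_error_Some. congruence. Qed.

Lemma in_bucket_iff j Bj I : nth_error (buckets H) j = Some Bj -> in_bucket H j I <-> In I Bj.
Proof.
  intros HBj. split.
  - intros [Bj' [HBj' HI]]. rewrite HBj in HBj'. now injection HBj' as <-.
  - intros HI. now exists Bj.
Qed.

Lemma bucket_points j Bj x : nth_error (buckets H) j = Some Bj ->
  at_bucket H j x <-> exists I, In I Bj /\ in_int I (INR x).
Proof.
  intros HBj. unfold at_bucket. now setoid_rewrite (in_bucket_iff j Bj _ HBj).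
Qed.

Lemma bucket_inhabited j : j < length (buckets H) -> exists x, at_bucket H j x.
Proof.
  intros Hj. apply nth_error_Some in Hj.
  destruct (nth_error (buckets H) j) as [[|I Bj] |] eqn:HBj; [| | easy].
  - destruct (bucket_size_1_2 j [] HBj) as [E | E]; discriminate.
  - assert (HI : in_bucket H j I) by (exists (I :: Bj); split; [exact HBj | now left]).
    destruct (bucket_block j I HI) as [n [_ Hn]]. exists n, I.
    split; [exact HI | apply Hn; pose proof (Nat.pow_nonzero 2 j); lia].
Qed.

Lemma at_bucket_order_succ j x y : at_bucket H j x -> at_bucket H (S j) y -> y < x.
Proof.
  destruct Hinv as (_ & _ & _ & _ & Horder & _).
  intros [I [HI HxI]] [G [HG HyG]]. apply INR_lt. exact (Horder j I G _ _ HI HG HxI HyG).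
Qed.

Lemma at_bucket_order j j' x y : j < j' -> at_bucket H j x -> at_bucket H j' y -> y < x.
Proof.
  intros Hjj'. replace j' with (S (j' - S j) + j) by lia. clear Hjj'.
  generalize (j' - S j) as d. intros d. revert j x. induction d as [|d IH]; intros j x Hx Hy.
  - exact (at_bucket_order_succ j x y Hx Hy).
  - destruct (bucket_inhabited (S j)) as [z Hz].
    { pose proof (at_bucket_index _ _ Hy). lia. }
    pose proof (at_bucket_order_succ j x z Hx Hz).
    assert (y < z) by (apply (IH (S j)); [exact Hz | now replace (S d + S j) with (S (S d) + j) by lia]).
    lia.
Qed.

Lemma bucket_final_segment j : layout_below H j -> final_segment (at_bucket H j) (time H - below H j).
Proof.
  intros [Hle Hlay]. split.
  - intros x Hx. pose proof (at_bucket_time _ _ Hx) as Hxt.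
    destruct (Nat.lt_ge_cases x (time H - below H j)) as [Hlt | Hge]; [exact Hlt | exfalso].
    destruct (proj1 (Hlay x Hxt) ltac:(lia)) as (i & Hij & Hxi).
    pose proof (at_bucket_unique _ _ _ Hx Hxi). lia.
  - intros x Hx. destruct (at_bucket_cover x) as [i Hxi]; [lia|].
    destruct (lt_eq_lt_dec i j) as [[Hij | <-] | Hji].
    + enough (time H <= x + below H j) by lia. apply (Hlay x); [lia | now exists i].
    + now left.
    + right. intros y Hy. exact (at_bucket_order j i y x Hji Hy Hxi).
Qed.

Lemma tiling_single j I1 e : nth_error (buckets H) j = Some [I1] ->
  final_segment (at_bucket H j) e -> bucket_tiling H j e.
Proof.
  intros HBj [Hin Hcov]. unfold bucket_tiling, bucket_size.
  rewrite (nth_error_nth _ _ _ HBj). cbn [length].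
  pose proof (Nat.pow_nonzero 2 j) as HL.
  destruct (bucket_block j I1) as [n1 [Hlo1 Hn1]]; [now apply (in_bucket_iff j _ _ HBj); left|].
  assert (Hpts : forall x, at_bucket H j x <-> n1 <= x < n1 + 2 ^ j).
  { intros x. rewrite (bucket_points j _ x HBj), <- Hn1. split.
    - intros (I & [<- | []] & HxI). exact HxI.
    - intros HxI. exists I1. split; [now left | exact HxI]. }
  assert (He : n1 + 2 ^ j = e).
  { apply tile_one; [lia | |].
    - enough (n1 + 2 ^ j - 1 < e) by lia. apply Hin, Hpts. lia.
    - intros x Hx. destruct (Hcov x Hx) as [Hxj | Hbelow]; [left; now apply Hpts|].
      right. apply Hbelow, Hpts. lia. }
  split; [lia|]. split.
  - intros x. rewrite Hpts. lia.
  - intros I HI. apply (in_bucket_iff j _ _ HBj) in HI as [<- | []].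
    exists n1. split; [easy | lia].
Qed.

Lemma tiling_pair j I1 I2 e : nth_error (buckets H) j = Some [I1; I2] ->
  final_segment (at_bucket H j) e -> bucket_tiling H j e.
Proof.
  intros HBj [Hin Hcov]. unfold bucket_tiling, bucket_size.
  rewrite (nth_error_nth _ _ _ HBj). cbn [length].
  pose proof (Nat.pow_nonzero 2 j) as HL.
  destruct (bucket_block j I1) as [n1 [Hlo1 Hn1]]; [now apply (in_bucket_iff j _ _ HBj); left|].
  destruct (bucket_block j I2) as [n2 [Hlo2 Hn2]]; [now apply (in_bucket_iff j _ _ HBj); right; left|].
  assert (Hpts : forall x, at_bucket H j x <-> n1 <= x < n1 + 2 ^ j \/ n2 <= x < n2 + 2 ^ j).
  { intros x. rewrite (bucket_points j _ x HBj), <- Hn1, <- Hn2. split.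
    - intros (I & [<- | [<- | []]] & HxI); [left | right]; exact HxI.
    - intros [HxI | HxI]; [exists I1 | exists I2]; split; try exact HxI; simpl; tauto. }
  assert (He : (n1 + 2 ^ j = n2 /\ n2 + 2 ^ j = e) \/ (n2 + 2 ^ j = n1 /\ n1 + 2 ^ j = e)).
  { apply tile_two; [lia | | | |].
    - intros x [Hx1 Hx2]. apply Hn1 in Hx1. apply Hn2 in Hx2.
      exact (pair_bucket_disjoint j I1 I2 _ HBj Hx1 Hx2).
    - enough (n1 + 2 ^ j - 1 < e) by lia. apply Hin, Hpts. lia.
    - enough (n2 + 2 ^ j - 1 < e) by lia. apply Hin, Hpts. lia.
    - intros x Hx. destruct (Hcov x Hx) as [Hxj | Hbelow]; [apply Hpts in Hxj; tauto|].
      right; right. split; apply Hbelow, Hpts; lia. }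
  split; [lia|]. split.
  - intros x. rewrite Hpts. lia.
  - intros I HI. apply (in_bucket_iff j _ _ HBj) in HI as [<- | [<- | []]];
      [exists n1 | exists n2]; split; easy || lia.
Qed.

Lemma bucket_tiles j e : j < length (buckets H) ->
  final_segment (at_bucket H j) e -> bucket_tiling H j e.
Proof.
  intros Hj. apply nth_error_Some in Hj.
  destruct (nth_error (buckets H) j) as [Bj|] eqn:HBj; [|easy].
  destruct (bucket_size_1_2 j Bj HBj) as [Hc | Hc]; destruct Bj as [|I1 [|I2 [|]]]; try discriminate.
  - exact (tiling_single j I1 e HBj).
  - exact (tiling_pair j I1 I2 e HBj).
Qed.

Lemma layout_below_succ j : j < length (buckets H) -> layout_below H j -> layout_below H (S j).
Proof.
  intros Hj Hlay.
  destruct (bucket_tiles j _ Hj (bucket_final_segment j Hlay)) as (Hfit & Hpts & _).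
  destruct Hlay as [Hle Hlay].
  assert (Hbelow : below H (S j) = below H j + bucket_size H j * 2 ^ j) by reflexivity.
  split; [lia|]. intros x Hx. rewrite Hbelow. split.
  - intros Hge. destruct (Nat.le_gt_cases (time H) (x + below H j)) as [Hle' | Hgt].
    + destruct (proj1 (Hlay x Hx) Hle') as (i & Hi & Hxi). exists i. split; [lia | exact Hxi].
    + exists j. split; [lia|]. apply Hpts. lia.
  - intros (i & Hi & Hxi). destruct (Nat.lt_ge_cases i j) as [Hij | Hji].
    + enough (time H <= x + below H j) by lia. apply (Hlay x Hx). now exists i.
    + assert (i = j) as -> by lia. apply Hpts in Hxi. lia.
Qed.

Lemma layout_below_all j : j <= length (buckets H) -> layout_below H j.
Proof.
  induction j as [|j IH]; intros Hj.
  - split; [cbn; lia|]. intros x Hx. split; [cbn; lia | intros (i & Hi & _); lia].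
  - apply layout_below_succ; [lia | apply IH; lia].
Qed.

Lemma below_all_buckets : 0 < time H -> below H (length (buckets H)) = time H.
Proof.
  intros Ht. destruct (layout_below_all (length (buckets H)) (le_n _)) as [Hle Hlay].
  enough (time H <= 0 + below H (length (buckets H))) by lia.
  apply (Hlay 0 Ht). destruct (at_bucket_cover 0 Ht) as [i Hi].
  exists i. split; [exact (at_bucket_index i 0 Hi) | exact Hi].
Qed.

Lemma below_code_spec : 0 < time H ->
  2 ^ length (buckets H) <= S (time H) < 2 ^ S (length (buckets H)) /\
  forall K, K <= length (buckets H) ->
    below H K + 1 = below_code (time H) (length (buckets H)) K.
Proof.
  intros Ht. unfold below_code. replace (S (time H)) with (below H (length (buckets H)) + 1)
    by (rewrite (below_all_buckets Ht); lia).
  unfold below. apply sum_pow2_binary. intros i Hi. unfold bucket_size.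
  destruct (bucket_size_1_2 i _ (nth_error_nth' _ [] Hi)); lia.
Qed.

Lemma element_position a : a < time H -> exists j I n,
  in_bucket H j I /\ j < length (buckets H) /\ is_block I n (2 ^ j) /\ n <= a < n + 2 ^ j /\
  below H (S j) <= time H /\ time H - below H (S j) <= a < time H - below H j /\
  (n = time H - below H (S j) \/ n = time H - below H (S j) + 2 ^ j).
Proof.
  intros Ha. destruct (at_bucket_cover a Ha) as [j Haj].
  pose proof (at_bucket_index j a Haj) as Hj.
  destruct (bucket_tiles j _ Hj (bucket_final_segment j (layout_below_all j ltac:(lia))))
    as (Hfit & Hpts & Hstarts).
  destruct Haj as [I [HI HaI]].
  destruct (Hstarts I HI) as (n & [Hlo Hn] & Hstart).
  assert (Hbelow : below H (S j) = below H j + bucket_size H j * 2 ^ j) by reflexivity.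
  assert (Haj : time H - below H j - bucket_size H j * 2 ^ j <= a < time H - below H j)
    by (apply Hpts; now exists I).
  assert (Han : n <= a < n + 2 ^ j) by (apply Hn; exact HaI).
  exists j, I, n. split; [exact HI|]. split; [exact Hj|]. split; [split; assumption|].
  lia.
Qed.

End Layout.

Theorem lemma4 :
  exists (prog : list instr) (C : nat),
    forall (w : nat) (H : heap_state) (a : nat),
      heap_inv H ->
      In a (elems H) ->
      (S (time H) < 2 ^ w)%nat ->
      exists rf : regfile,
        run w prog C 0 (init_regs a (time H)) = Some rf /\
        exists Bj I,
          nth_error (buckets H) (rf 0%nat) = Some Bj /\ In I Bj /\
          lo I = INR (rf 1%nat) /\ in_int I (INR a).
Proof.
  exists locate, 22. intros w H a Hinv Ha Hw.
  assert (Hat : a < time H) by (destruct Hinv as (Helems & _); exact (Helems a Ha)).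
  destruct (element_position H Hinv a Hat)
    as (j & I & n & [Bj [HBj HIBj]] & Hj & [Hlo Hn] & Han & Hfit & Haj & Hstart).
  destruct (below_code_spec H Hinv ltac:(lia)) as [Hm Hcode].
  pose proof (Hcode j ltac:(lia)). pose proof (Hcode (S j) ltac:(lia)).
  destruct (locate_correct w (time H) a (length (buckets H)) j n) as (rf & Hrun & Hr0 & Hr1);
    try lia.
  exists rf. split; [exact Hrun|]. exists Bj, I. rewrite Hr0, Hr1.
  split; [exact HBj|]. split; [exact HIBj|]. split; [exact Hlo|]. now apply Hn.
Qed.
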